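(* Let $(X,\rho)$ be a symmetric rack and let $S=\{S_x \mid x\in X\}$ be a family of sets. Suppose that for all $x,y\in X$ we are given maps $\alpha_{x,y}: S_x\times S_y\to S_{x*y}$ and $\beta_x: S_x\to S_{\rho(x)}$; for $t\in S_y$ write $\alpha_{x,y}(t):S_x\to S_{x*y}$ for the map $s\mapsto \alpha_{x,y}(s,t)$. Let $X\times S=\{(x,s)\mid x\in X,\ s\in S_x\}$ with the binary operation $$(x,s)*(y,t)=\big(x*y,\ \alpha_{x,y}(s,t)\big)$$ and the map $\rho_{\alpha,\beta}:X\times S\to X\times S$, $\rho_{\alpha,\beta}(x,s)=\big(\rho(x),\beta_x(s)\big)$. Then $X\times S$ with this operation is a symmetric rack with good involution $\rho_{\alpha,\beta}$ if and only if for all $x,y,z\in X$, $s\in S_x$, $t\in S_y$, $w\in S_z$: (1) $\alpha_{x,y}(t):S_x\to S_{x*y}$ is a bijection; (2) $\alpha_{x*y,z}\big(\alpha_{x,y}(s,t),w\big)=\alpha_{x*z,y*z}\big(\alpha_{x,z}(s,w),\alpha_{y,z}(t,w)\big)$; (3) $\alpha_{\rho(x),y}\big(\beta_x(s),t\big)=\beta_{x*y}\big(\alpha_{x,y}(s,t)\big)$; (4) $\beta_{\rho(x)}\beta_x(s)=s$; (5) $\alpha_{x,\rho(y)}(\beta_y(t))(s)=\big(\alpha_{x*^{-1}y,y}(t)\big)^{-1}(s)$. Furthermore, if $(X,\rho)$ is a symmetric quandle, then $X\times S$ is a symmetric quandle (with this operation and involution) if and only if (1)–(5) hold and additionally (6)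 $\alpha_{x,x}(s,s)=s$ for all $x\in X$, $s\in S_x$.
   Context: A rack is a set $X$ with a binary operation $*$ such that for every $y\in X$ the map $x\mapsto x*y$ is a bijection of $X$ (its inverse is written $x\mapsto x*^{-1}y$) and $(x*y)*z=(x*z)*(y*z)$ for all $x,y,z$. A quandle is a rack with $x*x=x$ for all $x$. A good involution of a rack (quandle) $X$ is a map $\rho:X\to X$ with $\rho^2=\mathrm{id}_X$, $\rho(x*y)=\rho(x)*y$ and $x*\rho(y)=x*^{-1}y$ for all $x,y\in X$; the pair $(X,\rho)$ is then called a symmetric rack (symmetric quandle). *)

From mathcomp Require Export ssreflect ssrfun ssrbool.

Set Implicit Arguments.
Unset Strict Implicit.

Definition is_rack (T : Type) (op : T -> T -> T) : Prop :=
  (forall y : T, bijective (fun x => op x y)) /\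
  (forall x y z : T, op (op x y) z = op (op x z) (op y z)).

(* rho is a good involution of the rack (T, op).  The condition
   x * rho(y) = x *^{-1} y is written as (x * rho y) * y = x, i.e.
   x * rho y is the (unique) preimage of x under (_ * y). *)
Definition good_involution (T : Type) (op : T -> T -> T) (rho : T -> T) : Prop :=
  (forall x : T, rho (rho x) = x) /\
  (forall x y : T, rho (op x y) = op (rho x) y) /\
  (forall x y : T, op (op x (rho y)) y = x).

Definition symmetric_rack (T : Type) (op : T -> T -> T) (rho : T -> T) : Prop :=
  is_rack op /\ good_involution op rho.

Definition symmetric_quandle (T : Type) (op : T -> T -> T) (rho : T -> T) : Prop :=
  symmetric_rack op rho /\ (forall x : T, op x x = x).

Definition ext_op (X : Type) (S : X -> Type) (op : X -> X -> X)
  (alpha : forall x y : X, S x -> S y -> S (op x y))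
  (p q : {x : X & S x}) : {x : X & S x} :=
  existT S (op (projT1 p) (projT1 q)) (alpha _ _ (projT2 p) (projT2 q)).

Definition ext_rho (X : Type) (S : X -> Type) (rho : X -> X)
  (beta : forall x : X, S x -> S (rho x))
  (p : {x : X & S x}) : {x : X & S x} :=
  existT S (rho (projT1 p)) (beta _ (projT2 p)).

(* Conditions (1)-(5).  Equalities between elements of fibres S_a, S_b with
   a = b only propositionally are stated as equalities in the total space. *)
Definition conditions_1_5 (X : Type) (S : X -> Type) (op opinv : X -> X -> X)
  (rho : X -> X) (alpha : forall x y : X, S x -> S y -> S (op x y))
  (beta : forall x : X, S x -> S (rho x)) : Prop :=
  forall (x y z : X) (s : S x) (t : S y) (w : S z),
    bijective (fun s' : S x => alpha x y s' t) /\
    existT S _ (alpha _ _ (alpha x y s t) w)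
      = existT S _ (alpha _ _ (alpha x z s w) (alpha y z t w)) /\
    existT S _ (alpha _ _ (beta x s) t) = existT S _ (beta _ (alpha x y s t)) /\
    existT S _ (beta _ (beta x s)) = existT S x s /\
    (* (5): alpha_{x,rho y}(beta_y t)(s) = (alpha_{x*^-1 y, y}(t))^{-1}(s),
       i.e. it equals every v with alpha_{x*^-1 y,y}(v,t) = s. *)
    (forall v : S (opinv x y),
        existT S _ (alpha _ _ v t) = existT S x s ->
        existT S _ (alpha x (rho y) s (beta y t)) = existT S _ v).

Definition condition_6 (X : Type) (S : X -> Type) (op : X -> X -> X)
  (alpha : forall x y : X, S x -> S y -> S (op x y)) : Prop :=
  forall (x : X) (s : S x), existT S _ (alpha x x s s) = existT S x s.

(** Conditions (2), (3), (4) and (6) are literally self-distributivity, the two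
    involution laws and idempotence of the total space [{x : X & S x}], evaluated
    at points [(x, s)], [(y, t)], [(z, w)].  Right multiplication by [(y, t)] lies
    over the bijection [_ * y] of [X], so it is bijective iff it is bijective on
    every fibre, which is (1).  Given that, the last involution law
    [(p * rho q) * q = p] says that [p * rho q] is the unique preimage of [p] under
    [_ * q]; as that preimage lies over [x *^-1 y], this is (5). *)

From Stdlib Require Import Eqdep ClassicalEpsilon.

Lemma inj_surj_bijective {A B : Type} {f : A -> B} :
  injective f -> (forall b, exists a, f a = b) -> bijective f.
Proof.
move=> f_inj f_surj.
exists (fun b => proj1_sig (constructive_indefinite_description _ (f_surj b))).
- by move=> a; apply: f_inj; case: constructive_indefinite_description.
- by move=> b; case: constructive_indefinite_description.
Qed.

Lemma bij_cancel_iff_preimage {T : Type} {f : T -> T} (g : T -> T) :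
  bijective f -> cancel g f <-> (forall a p, f p = a -> g a = p).
Proof.
case=> finv fK fKV; split=> [gK a p fpa | g_pre a].
- by apply: (can_inj fK); rewrite gK.
- by rewrite (g_pre a (finv a)).
Qed.

Section SigmaMap.

Variables (X Y : Type) (S : X -> Type) (S' : Y -> Type).
Variables (b : X -> Y) (phi : forall x, S x -> S' (b x)).

Definition sigma_map (p : {x : X & S x}) : {y : Y & S' y} :=
  existT S' (b (projT1 p)) (phi _ (projT2 p)).

Lemma sigma_map_bijective :
  bijective b -> bijective sigma_map <-> forall x, bijective (phi x).
Proof.
case=> binv bK bKV; split=> [[g gK gKV] x | phi_bij].
- apply: inj_surj_bijective => [s1 s2 e | u].
  + have : existT S x s1 = existT S x s2.
      by apply: (can_inj gK); rewrite /sigma_map /= e.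
    exact: inj_pair2.
  + case: (g (existT S' (b x) u)) (gKV (existT S' (b x) u)) => [x' s'] e.
    have ex : x' = x by apply: (can_inj bK); exact: (f_equal (@projT1 _ _) e).
    by subst x'; exists s'; apply: inj_pair2 e.
- apply: inj_surj_bijective => [[x1 s1] [x2 s2] e | [y u]].
  + have ex : x1 = x2 by apply: (can_inj bK); exact: (f_equal (@projT1 _ _) e).
    subst x2; case: (phi_bij x1) => psi psiK _.
    by rewrite -(psiK s1) -(psiK s2) (inj_pair2 _ _ _ _ _ e).
  + have := bKV y; move: (binv y) => x ex; subst y.
    case: (phi_bij x) => psi _ psiKV.
    by exists (existT S x (psi u)); rewrite /sigma_map /= psiKV.
Qed.

End SigmaMap.

Arguments sigma_map_bijective {X Y S S' b} phi.

Section Extension.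

Context {X : Type} {op opinv : X -> X -> X} {rho : X -> X}.
Hypothesis opK : forall y, cancel (op^~ y) (opinv^~ y).
Hypothesis opinvK : forall y, cancel (opinv^~ y) (op^~ y).
Hypothesis op_rhoK : forall x y, op (op x y) (rho y) = x.

Context {S : X -> Type}.
Variables (alpha : forall x y, S x -> S y -> S (op x y)) (beta : forall x, S x -> S (rho x)).

Local Notation T := {x : X & S x}.
Local Notation mul := (ext_op alpha).
Local Notation inv := (ext_rho beta).

Lemma ext_op_bijectiveE :
  (forall q : T, bijective (mul^~ q)) <->
  (forall x y (t : S y), bijective (fun s : S x => alpha x y s t)).
Proof.
have op_bij y : bijective (op^~ y) := Bijective (opK y) (opinvK y).
split=> [mul_bij x y t | alpha_bij [y t]].
- exact: (proj1 (sigma_map_bijective (fun x s => alpha x y s t) (op_bij y))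
                 (mul_bij (existT S y t))).
- exact: (proj2 (sigma_map_bijective (fun x s => alpha x y s t) (op_bij y))
                 (fun x => alpha_bij x y t)).
Qed.

Lemma ext_op_preimage {p q a : T} :
  mul p q = a -> exists v : S (opinv (projT1 a) (projT1 q)), p = existT S _ v.
Proof.
case: p q => [x v] [y t] <- /=.
by rewrite opK; exists v.
Qed.

Lemma condition5E {x y : X} (s : S x) (t : S y) :
  (forall v : S (opinv x y),
      existT S _ (alpha _ _ v t) = existT S x s ->
      existT S _ (alpha x (rho y) s (beta y t)) = existT S _ v) <->
  (forall p : T, mul p (existT S y t) = existT S x s ->
      mul (existT S x s) (inv (existT S y t)) = p).
Proof.
split=> [cond5 p e | pre v]; last exact: (pre (existT S _ v)).
by have [v ev] := ext_op_preimage e; subst p; apply: cond5 e.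
Qed.

Lemma conditions_of_ext_symmetric_rack :
  symmetric_rack mul inv -> conditions_1_5 opinv alpha beta.
Proof.
case=> [[mul_bij mul_dist] [invK [inv_mul mul_invK]]] x y z s t w.
have pre := proj1 (bij_cancel_iff_preimage (mul^~ (inv (existT S y t)))
                     (mul_bij (existT S y t))) (mul_invK^~ _).
split; first exact: (proj1 ext_op_bijectiveE mul_bij).
split; first exact: (mul_dist (existT S x s) (existT S y t) (existT S z w)).
split; first exact: (esym (inv_mul (existT S x s) (existT S y t))).
split; first exact: (invK (existT S x s)).
exact: (proj2 (condition5E s t) (pre (existT S x s))).
Qed.

Lemma fibre_bijective_of_conditions :
  conditions_1_5 opinv alpha beta ->
  forall x y (t : S y), bijective (fun s : S x => alpha x y s t).
Proof.
move=> cond x y t.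
have bij_at (s : S x) := proj1 (cond x y x s t s).
apply: inj_surj_bijective => [s1 s2 | u].
- by case: (bij_at s1) => g gK _; exact: (can_inj gK).
- (* (1) is only available at an inhabited fibre; [u * rho t] lies over [x]. *)
  have s : S x := eq_rect _ S (alpha _ _ u (beta y t)) x (op_rhoK x y).
  by case: (bij_at s) => g _ gK; exists (g u); apply: gK.
Qed.

Lemma ext_symmetric_rack_of_conditions :
  conditions_1_5 opinv alpha beta -> symmetric_rack mul inv.
Proof.
move=> cond.
have mul_bij := proj2 ext_op_bijectiveE (fibre_bijective_of_conditions cond).
split; split; first exact: mul_bij.
- by move=> [x s] [y t] [z w]; case: (cond x y z s t w) => _ [].
- by move=> [x s]; case: (cond x x x s s s) => _ [_ [_ []]].
split.
- by move=> [x s] [y t]; case: (cond x y x s t s) => _ [_ [e3 _]]; exact: esym e3.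
- move=> p q; move: p; case: q => y t.
  apply: (proj2 (bij_cancel_iff_preimage (mul^~ (inv (existT S y t))) (mul_bij _))).
  move=> [x s]; apply/(condition5E s t).
  by case: (cond x y x s t s) => _ [_ [_ []]].
Qed.

Lemma ext_symmetric_rack_iff :
  symmetric_rack mul inv <-> conditions_1_5 opinv alpha beta.
Proof.
split; [exact: conditions_of_ext_symmetric_rack | exact: ext_symmetric_rack_of_conditions].
Qed.

Lemma ext_idempotentE : (forall p : T, mul p p = p) <-> condition_6 alpha.
Proof.
by split=> [idem x s | cond6 [x s]]; [exact: (idem (existT S x s)) | exact: cond6].
Qed.

Lemma ext_symmetric_quandle_iff :
  symmetric_quandle mul inv <-> conditions_1_5 opinv alpha beta /\ condition_6 alpha.
Proof.
split=> [[rack idem] | [cond cond6]]; split.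
- exact/ext_symmetric_rack_iff.
- exact/ext_idempotentE.
- exact/ext_symmetric_rack_iff.
- exact/ext_idempotentE.
Qed.

End Extension.

Theorem proposition3p1
  (X : Type) (op opinv : X -> X -> X) (rho : X -> X)
  (Hinv1 : forall x y : X, op (opinv x y) y = x)
  (Hinv2 : forall x y : X, opinv (op x y) y = x)
  (HX : symmetric_rack op rho)
  (S : X -> Type)
  (alpha : forall x y : X, S x -> S y -> S (op x y))
  (beta : forall x : X, S x -> S (rho x)) :
  (symmetric_rack (ext_op alpha) (ext_rho beta)
     <-> conditions_1_5 opinv alpha beta) /\
  ((forall x : X, op x x = x) ->
     (symmetric_quandle (ext_op alpha) (ext_rho beta)
        <-> conditions_1_5 opinv alpha beta /\ condition_6 alpha)).
Proof.
have opK y : cancel (op^~ y) (opinv^~ y) := Hinv2^~ y.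
have opinvK y : cancel (opinv^~ y) (op^~ y) := Hinv1^~ y.
have [_ [rhoK [_ op_rho_invK]]] := HX.
have op_rhoK x y : op (op x y) (rho y) = x by rewrite -{1}(rhoK y) op_rho_invK.
split; first exact: (ext_symmetric_rack_iff opK opinvK op_rhoK).
(* Condition (6) is stated in the total space, so it already contains [x * x = x]. *)
by move=> _; exact: (ext_symmetric_quandle_iff opK opinvK op_rhoK).
Qed.
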